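(* Let $\varphi:V\to V$ be an $R$-linear map, where $R=\mathbb{R}[t^{\pm1}]$ and $V$ is a free $R$-module of rank $n-1$. Suppose that the $\mathbb{E}$-linear map $\varphi\otimes_R\mathrm{Id}:V\otimes_R\mathbb{E}\to V\otimes_R\mathbb{E}$ has all of its eigenvalues $(\lambda_1,\dots,\lambda_{n-1})$ in $\mathbb{E}$. Then for every $m\geq1$, every eigenvalue of the $\mathbb{F}_m$-linear map $\varphi^{\otimes_{\mathbb{R}}m}\otimes_{R_m}\mathrm{Id}:V_m\otimes_{R_m}\mathbb{F}_m\to V_m\otimes_{R_m}\mathbb{F}_m$ is of the form $\lambda_{i_1}\otimes\cdots\otimes\lambda_{i_m}$ with $1\leq i_1,\dots,i_m\leq n-1$.
   Context: $\mathbb{E}=\bigcup_{k\ge1}\mathbb{R}((t^{1/k}))$ is the field of Puiseux series over $\mathbb{R}$, containing $R$. $R_m=R^{\otimes_{\mathbb{R}}m}$, $\mathbb{E}_m=\mathbb{E}^{\otimes_{\mathbb{R}}m}\supset R_m$, which is an integral domain with field of fractions $\mathbb{F}_m$; $V_m=V^{\otimes_{\mathbb{R}}m}$ is an $R_m$-module via $(r_1\otimes\cdots\otimes r_m)(u_1\otimes\cdots\otimes u_m)=r_1u_1\otimes\cdots\otimes r_mu_m$, and $\varphi^{\otimes_{\mathbb{R}}m}(u_1\otimes\cdots\otimes u_m)=\varphi(u_1)\otimes\cdots\otimes\varphi(u_m)$. Elements $\lambda_{i_1}\otimes\cdots\otimes\lambda_{i_m}\in\mathbb{E}_m$ are regarded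 in $\mathbb{F}_m$. *)

From HB Require Import structures.
From mathcomp Require Import all_boot all_order all_algebra.
From mathcomp Require Import mxtens.
From mathcomp Require Import reals.
Set Implicit Arguments. Unset Strict Implicit. Unset Printing Implicit Defensive.
Import Order.TTheory GRing.Theory Num.Theory.
Local Open Scope ring_scope.

(* [laurent_in c t x]: x lies in the image of R = K[t, t^-1] inside E,
   where c : K -> E is the structure map of the K-algebra E and t \in E
   is the (invertible) variable: x = p(t) * t^-k for some p in K[X], k. *)
Definition laurent_in (K : realType) (E : fieldType) (c : {rmorphism K -> E})
  (t : E) (x : E) : Prop :=
  exists (p : {poly K}) (k : nat), x = (map_poly c p).[t] * t ^- k.

Fixpoint tens_pow (F : comRingType) (d : nat) (B : nat -> 'M[F]_d) (k : nat)
  : 'M[F]_(d ^ k) :=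
  match k return 'M[F]_(d ^ k) with
  | 0 => 1%:M
  | k'.+1 => castmx (esym (expnSr d k'), esym (expnSr d k'))
                    (tens_pow B k' *t B k')
  end.

From HB Require Import structures.
From mathcomp Require Import all_boot all_order all_algebra.
From mathcomp Require Import mxtens.
From mathcomp Require Import reals.
Import Order.TTheory GRing.Theory Num.Theory.
Local Open Scope ring_scope.

(* By induction on m it suffices to understand the eigenvalues mu of a
   Kronecker product C (x) D whose second factor D has split characteristic
   polynomial prod_i (X - l_i).  The matrices 1 (x) (D - l_i) commute with
   C (x) D and their product vanishes by Cayley-Hamilton, so one of them kills
   an eigenvector Y of C (x) D.  Then Y (1 (x) D) = l_i Y, and as
   C (x) D = (1 (x) D)(C (x) 1), either l_i = mu = 0 or Y is an eigenvector of
   C (x) 1, hence mu / l_i is an eigenvalue of C.  Only linear algebra over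
   F_m is involved: the Laurent-polynomial entries of A and the compatibility
   of the embeddings iota k on K play no role. *)

Lemma sum_mxtens_index (V : nmodType) a b (G : 'I_(a * b) -> V) :
  \sum_k G k = \sum_i \sum_j G (mxtens_index (i, j)).
Proof.
rewrite pair_big /= (reindex (@mxtens_index a b)) /=.
  by apply: eq_bigr => -[].
exists (@mxtens_unindex a b) => k _.
  by rewrite mxtens_indexK.
by rewrite mxtens_unindexK.
Qed.

Section TensorProductAlgebra.
Local Set Implicit Arguments.
Local Unset Strict Implicit.

Variable R : comPzRingType.

Lemma tensmx_scalar a b (x y : R) :
  (x%:M : 'M_a) *t (y%:M : 'M_b) = (x * y)%:M.
Proof.
apply/matrixP=> i j.
case: (mxtens_indexP i)=> i1 i2; case: (mxtens_indexP j)=> j1 j2.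
rewrite tensmxE !mxE (inj_eq (can_inj (@mxtens_indexK a b))) xpair_eqE.
by case: (i1 == j1); case: (i2 == j2); rewrite ?mulr1n ?mulr0n ?mulr0 ?mul0r.
Qed.

Lemma tensmxBr m n p q (M : 'M[R]_(m, n)) (P Q : 'M[R]_(p, q)) :
  M *t (P - Q) = M *t P - M *t Q.
Proof. by apply/matrixP=> i j; rewrite !mxE mulrBr. Qed.

Lemma tens1mx_prod a b I (s : seq I) (N : I -> 'M[R]_b) :
  (1%:M : 'M_a) *t \prod_(i <- s) N i = \prod_(i <- s) (1%:M *t N i).
Proof.
apply: (big_morph (fun P : 'M_b => (1%:M : 'M_a) *t P)); last first.
  by rewrite tensmx_scalar mulr1.
by move=> P Q; rewrite -!mulmxE tensmx_mul mulmx1.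
Qed.

End TensorProductAlgebra.

Section TensorEigenvalues.
Local Set Implicit Arguments.
Local Unset Strict Implicit.

Variable F : fieldType.

Lemma eigenvalue_castmx p q (e : p = q) (M : 'M[F]_p) x :
  eigenvalue (castmx (e, e) M) x = eigenvalue M x.
Proof. by case: q / e in M *; rewrite castmx_id. Qed.

Lemma eigenvalue_scalar_mx n (x mu : F) :
  eigenvalue (x%:M : 'M[F]_n) mu -> mu = x.
Proof.
case/eigenvalueP=> v; rewrite mul_mx_scalar => /eqP.
rewrite -subr_eq0 -scalerBl scaler_eq0 subr_eq0 => /orP[/eqP-> //|/eqP->].
by rewrite eqxx.
Qed.

Lemma eigenvalue_tensmx1 a b (C : 'M[F]_a) nu :
  eigenvalue (C *t (1%:M : 'M_b)) nu -> eigenvalue C nu.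
Proof.
case/eigenvalueP=> Y YE Y0.
pose slice j := \row_i Y 0 (mxtens_index (i, j)) : 'rV_a.
have sliceE j : slice j *m C = nu *: slice j.
  apply/rowP=> i; rewrite !mxE.
  move/rowP: YE => /(_ (mxtens_index (i, j))); rewrite !mxE => <-.
  rewrite sum_mxtens_index; apply: eq_bigr => k _.
  rewrite (bigD1 j) //= big1 ?addr0 => [|l /negbTE lj].
    by rewrite tensmxE !mxE eqxx mulr1n mulr1.
  by rewrite tensmxE mxE lj mulr0n mulr0 mulr0.
have [k Yk] : exists k, Y 0 k != 0.
  apply/existsP; apply: contraNT Y0; rewrite negb_exists => /forallP Y0k.
  by apply/eqP/rowP => k; rewrite mxE; apply/eqP; move: (Y0k k); rewrite negbK.
case: (mxtens_indexP k) Yk => i j Yij.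
apply/eigenvalueP; exists (slice j) => //.
by apply: contraNneq Yij => /rowP/(_ i); rewrite !mxE => ->.
Qed.

Lemma eigenvector_factor_kernel n I (M : 'M[F]_n) (N : I -> 'M[F]_n)
    (s : seq I) mu (X : 'rV_n) :
  (forall i, comm_mx M (N i)) ->
  X != 0 -> X *m M = mu *: X -> X *m \prod_(i <- s) N i = 0 ->
  exists i, exists2 Y : 'rV_n, Y != 0 & Y *m M = mu *: Y /\ Y *m N i = 0.
Proof.
move=> MN; elim: s X => [|i s IHs] X X0 XM.
  by rewrite big_nil mulmx1 => X00; rewrite X00 eqxx in X0.
rewrite big_cons -mulmxE mulmxA.
have [XN0|XN0] := eqVneq (X *m N i) 0; first by move=> _; exists i, X.
apply: IHs => //.
by rewrite -mulmxA -MN mulmxA XM scalemxAl.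
Qed.

Lemma char_poly_split_prod_eq0 d (D : 'M[F]_d) (l : 'I_d -> F) :
  char_poly D = \prod_(i < d) ('X - (l i)%:P) ->
  \prod_(i < d) (D - (l i)%:M) = 0.
Proof.
case: d D l => [|d] D l hD; first by apply/matrixP=> -[].
rewrite -(Cayley_Hamilton D) hD rmorph_prod; apply: eq_bigr => i _.
by rewrite rmorphB /= horner_mx_X horner_mx_C.
Qed.

Lemma eigenvalue_tensmx a d (C : 'M[F]_a) (D : 'M[F]_d) (l : 'I_d -> F) mu :
  char_poly D = \prod_(i < d) ('X - (l i)%:P) -> eigenvalue (C *t D) mu ->
  exists i, (l i = 0 /\ mu = 0) \/ exists2 nu, eigenvalue C nu & mu = nu * l i.
Proof.
move=> hD /eigenvalueP[X XE X0].
pose N i := (1%:M : 'M_a) *t (D - (l i)%:M).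
have CDN i : comm_mx (C *t D) (N i).
  by rewrite /comm_mx !tensmx_mul mulmx1 mul1mx mulmxBl mulmxBr scalar_mxC.
have XN : X *m \prod_(i < d) N i = 0.
  by rewrite -tens1mx_prod char_poly_split_prod_eq0 // tensmx0 mulmx0.
have [i [Y Y0 [YE /eqP YN]]] := eigenvector_factor_kernel CDN X0 XE XN.
have YD : Y *m (1%:M *t D) = l i *: Y.
  move: YN; rewrite /N tensmxBr tensmx_scalar mul1r mulmxBr mul_mx_scalar.
  by rewrite subr_eq0 => /eqP.
have YC : l i *: (Y *m (C *t 1%:M)) = mu *: Y.
  by rewrite -YE (tensmx_decl C D) mulmxA YD scalemxAl.
exists i; have [li0|li_neq0] := eqVneq (l i) 0; [left | right].
  split=> //; apply/eqP; move/esym/eqP: YC.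
  by rewrite li0 scale0r scaler_eq0 (negbTE Y0) orbF.
exists (mu / l i); last by rewrite divfK.
apply/eigenvalue_tensmx1/eigenvalueP; exists Y => //.
by apply: (scalerI li_neq0); rewrite YC scalerA [l i * _]mulrC divfK.
Qed.

Lemma prod_ord_recr_index m d (lam : nat -> 'I_d -> F) (idx : 'I_m -> 'I_d) i :
  exists idx' : 'I_m.+1 -> 'I_d,
    \prod_(k < m.+1) lam k (idx' k) = (\prod_(k < m) lam k (idx k)) * lam m i.
Proof.
exists (fun k => oapp idx i (unlift ord_max k)).
rewrite big_ord_recr /= unlift_none; congr (_ * _); apply: eq_bigr => k _.
have -> : widen_ord (leqnSn m) k = lift ord_max k.
  by apply: val_inj; rewrite /= /bump leqNgt ltn_ord.
by rewrite liftK.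
Qed.

Lemma eigenvalue_tens_pow d (B : nat -> 'M[F]_d) (lam : nat -> 'I_d -> F) :
  (forall k, char_poly (B k) = \prod_(i < d) ('X - (lam k i)%:P)) ->
  forall m mu, eigenvalue (tens_pow B m) mu ->
  exists idx : 'I_m -> 'I_d, mu = \prod_(k < m) lam k (idx k).
Proof.
move=> hB; elim=> [|m IHm] mu /=.
  by move/eigenvalue_scalar_mx->; exists (tnth [tuple]); rewrite big_ord0.
rewrite eigenvalue_castmx => /(eigenvalue_tensmx (hB m))[i].
case=> [[li0 ->] | [nu /IHm[idx ->] ->]].
  have [idx' E] := prod_ord_recr_index lam (fun _ : 'I_m => i) i.
  by exists idx'; rewrite E li0 mulr0.
by have [idx' E] := prod_ord_recr_index lam idx i; exists idx'; rewrite E.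
Qed.

End TensorEigenvalues.

Theorem mainTheorem11
  (K : realType)                       (* the reals *)
  (E : fieldType) (c : {rmorphism K -> E}) (t : E) (t_neq0 : t != 0)
  (n : nat)
  (A : 'M[E]_(n.-1))                   (* matrix of phi (x) Id over E *)
  (A_in_R : forall i j, laurent_in c t (A i j))   (* phi is R-linear *)
  (lambda : 'I_(n.-1) -> E)
  (hsplit : char_poly A = \prod_(i < n.-1) ('X - (lambda i)%:P))
  (m : nat) (m_gt0 : (0 < m)%N)
  (F : fieldType)                      (* F_m *)
  (iota : nat -> {rmorphism E -> F})   (* iota k : E -> F_m, k-th tensor factor *)
  (hiota_c : forall k1 k2 (r : K), iota k1 (c r) = iota k2 (c r)) :
  forall mu : F,
    eigenvalue (tens_pow (fun k => map_mx (iota k) A) m) mu ->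
    exists idx : 'I_m -> 'I_(n.-1),
      mu = \prod_(k < m) iota k (lambda (idx k)).
Proof.
move=> mu; apply: (@eigenvalue_tens_pow _ _ _ (fun k i => iota k (lambda i))).
move=> k; rewrite -map_char_poly hsplit rmorph_prod; apply: eq_bigr => i _.
exact: map_polyXsubC.
Qed.
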